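(* Let $C$ be a real $n\times n$ matrix with nonnegative entries that is nilpotent. Then for each $\varepsilon>0$ there exist a diagonal matrix $A$ with nonnegative entries and a matrix $B$ with nonnegative entries such that $C=AB-BA$ and $BA\leq\varepsilon C$ (entrywise).
   Context: Real $n\times n$ matrices are ordered entrywise: $X\leq Y$ means $x_{ij}\leq y_{ij}$ for all $i,j$; a matrix is positive if all its entries are nonnegative. *)

From mathcomp Require Import all_boot all_order all_algebra.
From mathcomp Require Import reals.
Set Implicit Arguments. Unset Strict Implicit. Unset Printing Implicit Defensive.
Import Order.TTheory GRing.Theory Num.Theory.
Local Open Scope ring_scope.

Definition mx_le (R : realType) (n : nat) (X Y : 'M[R]_n) : Prop :=
  forall i j, X i j <= Y i j.

Definition mx_nonneg (R : realType) (n : nat) (X : 'M[R]_n) : Prop :=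
  forall i j, 0 <= X i j.

Definition mx_diagonal (R : realType) (n : nat) (X : 'M[R]_n) : Prop :=
  forall i j, i != j -> X i j = 0.

Definition mx_nilpotent (R : realType) (n : nat) (X : 'M[R]_n) : Prop :=
  exists k : nat, X ^+ k = 0.

From mathcomp Require Import all_boot all_order all_algebra.
From mathcomp Require Import reals.
From mathcomp Require Import lra.
Import Order.TTheory GRing.Theory Num.Theory.
Set Implicit Arguments. Unset Strict Implicit. Unset Printing Implicit Defensive.
Local Open Scope ring_scope.

(* Scale C so that its positive entries are all at least K = 1 + 1/eps and
   let M = sum_k (lam C)^k = (1 - lam C)^-1, which is a finite nonnegative sum
   since C is nilpotent.  The row sums a of M satisfy a = 1 + lam C a, hence
   a_i >= 1 + K a_j whenever C_ij > 0.  With A = diag(a) and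
   B_ij = C_ij / (a_i - a_j) one gets (AB - BA)_ij = (a_i - a_j) B_ij = C_ij and
   (BA)_ij = C_ij a_j / (a_i - a_j) <= eps C_ij. *)

Section NonnegMatrices.

Variables (R : realType) (n : nat).
Implicit Types (X Y : 'M[R]_n).

Lemma mx_nonneg_mul X Y : mx_nonneg X -> mx_nonneg Y -> mx_nonneg (X * Y).
Proof.
move=> X_ge0 Y_ge0 i j; rewrite -mulmxE mxE.
by apply: sumr_ge0 => k _; apply: mulr_ge0.
Qed.

Lemma mx_nonneg_exp X k : mx_nonneg X -> mx_nonneg (X ^+ k).
Proof.
move=> X_ge0; elim: k => [|k IHk]; first by move=> i j; rewrite mxE ler0n.
by rewrite exprS; apply: mx_nonneg_mul.
Qed.

Lemma mx_nonneg_sum m (F : 'I_m -> 'M[R]_n) :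
  (forall k, mx_nonneg (F k)) -> mx_nonneg (\sum_(k < m) F k).
Proof.
by move=> F_ge0 i j; rewrite summxE; apply: sumr_ge0 => k _; apply: F_ge0.
Qed.

Lemma scalemxXn (c : R) X k : (c *: X) ^+ k = c ^+ k *: X ^+ k.
Proof.
elim: k => [|k IHk]; first by rewrite !expr0 scale1r.
by rewrite !exprS IHk -!mulmxE -scalemxAl -scalemxAr scalerA.
Qed.

Lemma mx_nilpotentZ (c : R) X : mx_nilpotent X -> mx_nilpotent (c *: X).
Proof. by case=> k Xk0; exists k; rewrite scalemxXn Xk0 scaler0. Qed.

End NonnegMatrices.

Lemma nilpotent_geometric_sum {T : pzRingType} {x : T} {m : nat} :
  x ^+ m = 0 -> x * (\sum_(k < m) x ^+ k) + 1 = \sum_(k < m) x ^+ k.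
Proof.
move=> xm0; have := subrX1 x m; rewrite xm0 sub0r mulrBl mul1r => sumE.
by rewrite -[1 in LHS]opprK sumE opprB addrCA subrr addr0.
Qed.

Lemma mx_nonneg_nilpotent_weights (R : realType) n (X : 'M[R]_n) :
  mx_nonneg X -> mx_nilpotent X ->
  exists a : 'I_n -> R,
    (forall i, 0 <= a i) /\ forall i j, 1 + X i j * a j <= a i.
Proof.
move=> X_ge0 [m Xm0].
set M := \sum_(k < m) X ^+ k.
have M_ge0 : mx_nonneg M by apply: mx_nonneg_sum => k; apply: mx_nonneg_exp.
have ME : X * M + 1 = M := nilpotent_geometric_sum Xm0.
set a : 'cV[R]_n := M *m const_mx 1.
have aE : a = X *m a + const_mx 1.
  by rewrite /a -{1}ME mulmxDl mulmxA mulmxE mul1mx.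
have a_ge0 i : 0 <= a i 0.
  by rewrite mxE; apply: sumr_ge0 => l _; rewrite mxE mulr1.
exists (fun i => a i 0); split=> // i j.
rewrite [in leRHS]aE [leRHS]mxE [X in _ <= _ + X]mxE [X in _ <= X + _]mxE.
rewrite addrC lerD2r (bigD1 j) //= lerDl.
by apply: sumr_ge0 => k _; apply: mulr_ge0.
Qed.

Lemma mx_nonneg_scale_support (R : realType) n (C : 'M[R]_n) (K : R) :
  mx_nonneg C -> 0 <= K ->
  exists2 lam : R, 0 <= lam & forall i j, C i j != 0 -> K <= lam * C i j.
Proof.
move=> C_ge0 K_ge0.
(* Zero entries contribute nothing to S, since 0^-1 = 0. *)
set S := \sum_(p : 'I_n * 'I_n) (C p.1 p.2)^-1.
have S_ge i j : (C i j)^-1 <= S.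
  rewrite /S (bigD1 (i, j)) //= lerDl.
  by apply: sumr_ge0 => p _; rewrite invr_ge0.
have S_ge0 : 0 <= S by apply: sumr_ge0 => p _; rewrite invr_ge0.
exists (K * S) => [|i j Cij_neq0]; first exact: mulr_ge0.
rewrite -mulrA ler_peMr // -(mulVf Cij_neq0).
exact: ler_wpM2r (S_ge i j).
Qed.

Lemma mx_nonneg_nilpotent_separating_weights (R : realType) n (C : 'M[R]_n)
    (K : R) :
  mx_nonneg C -> mx_nilpotent C -> 0 <= K ->
  exists a : 'I_n -> R,
    (forall i, 0 <= a i) /\ forall i j, C i j != 0 -> 1 + K * a j <= a i.
Proof.
move=> C_ge0 C_nil K_ge0.
have [lam lam_ge0 lamC_ge] := mx_nonneg_scale_support C_ge0 K_ge0.
have lamC_nonneg : mx_nonneg (lam *: C) by move=> i j; rewrite mxE mulr_ge0.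
have [a [a_ge0 a_super]] :=
  mx_nonneg_nilpotent_weights lamC_nonneg (mx_nilpotentZ lam C_nil).
exists a; split=> // i j Cij_neq0.
apply: le_trans (a_super i j); rewrite lerD2l mxE.
exact: ler_wpM2r (lamC_ge i j Cij_neq0).
Qed.

Lemma diag_mx_commutatorE (R : comPzRingType) n (d : 'rV[R]_n) (B : 'M[R]_n) :
  diag_mx d *m B - B *m diag_mx d = \matrix_(i, j) ((d 0 i - d 0 j) * B i j).
Proof.
rewrite mul_diag_mx mul_mx_diag; apply/matrixP => i j.
by rewrite !mxE mulrBl [B i j * _]mulrC.
Qed.

Lemma separated_weights_ratio (R : realFieldType) (eps x y : R) :
  0 < eps -> 0 <= y -> 1 + (1 + eps^-1) * y <= x ->
  0 < x - y /\ y / (x - y) <= eps.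
Proof.
move=> eps_gt0 y_ge0 xy.
have gap : eps + y <= eps * (x - y).
  have := ler_wpM2l (ltW eps_gt0) xy.
  by rewrite mulrDr mulr1 mulrDl mul1r mulrDr mulrA mulfV ?gt_eqF // mul1r; lra.
have gap_gt0 : 0 < x - y by rewrite -(pmulr_rgt0 _ eps_gt0); lra.
by split=> //; rewrite ler_pdivrMr //; lra.
Qed.

Theorem proposition4p2 (R : realType) (n : nat) (C : 'M[R]_n) :
  mx_nonneg C -> mx_nilpotent C ->
  forall eps : R, 0 < eps ->
  exists A B : 'M[R]_n,
    [/\ mx_diagonal A, mx_nonneg A, mx_nonneg B,
        C = A *m B - B *m A & mx_le (B *m A) (eps *: C)].
Proof.
move=> C_ge0 C_nil eps eps_gt0.
have K_ge0 : 0 <= 1 + eps^-1 by rewrite addr_ge0 ?invr_ge0 ?ltW.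
have [a [a_ge0 a_sep]] :=
  mx_nonneg_nilpotent_separating_weights C_ge0 C_nil K_ge0.
have ratio i j (Cij_neq0 : C i j != 0) :=
  separated_weights_ratio eps_gt0 (a_ge0 j) (a_sep i j Cij_neq0).
exists (diag_mx (\row_i a i)), (\matrix_(i, j) (C i j / (a i - a j))); split.
- by move=> i j i_neq_j; rewrite mxE (negbTE i_neq_j) mulr0n.
- by move=> i j; rewrite !mxE mulrn_wge0.
- move=> i j; rewrite mxE; have [->|/ratio[gap_gt0 _]] := eqVneq (C i j) 0.
    by rewrite mul0r.
  exact: divr_ge0 (C_ge0 i j) (ltW gap_gt0).
- rewrite diag_mx_commutatorE; apply/matrixP => i j; rewrite !mxE.
  have [->|/ratio[gap_gt0 _]] := eqVneq (C i j) 0; first by rewrite !mul0r mulr0.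
  by rewrite mulrC divfK ?gt_eqF.
- move=> i j; rewrite mul_mx_diag !mxE.
  have [->|/ratio[_ ratio_le]] := eqVneq (C i j) 0; first by rewrite !mul0r mulr0.
  by rewrite mulrAC -mulrA mulrC ler_wpM2r.
Qed.
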